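(* Assume the setting and Assumptions A1–A4 below. Run Ader with dynamical models (below) with \[ \mathcal{H}=\Big\{\eta_i=\frac{2^{i-1}D}{G}\sqrt{\frac1T}\ :\ i=1,\dots,N\Big\},\quad N=\Big\lceil\tfrac12\log_2(1+2T)\Big\rceil+1,\quad\alpha=\sqrt{8/(Tc^2)}. \] Then for any comparator sequence $\mathbf{u}_1,\dots,\mathbf{u}_{T+1}\in\mathcal{X}$, with $P_T'=\sum_{t=1}^T\|\mathbf{u}_{t+1}-\Phi_t(\mathbf{u}_t)\|_2$ and $k=\lfloor\frac12\log_2(1+\frac{2P_T'}{D})\rfloor+1$, \[ \sum_{t=1}^T f_t(\mathbf{x}_t)-\sum_{t=1}^T f_t(\mathbf{u}_t)\le\frac{3G}{2}\sqrt{T(D^2+2DP_T')}+\frac{c\sqrt{2T}}{4}\big[1+2\ln(k+1)\big]=O\big(\sqrt{T(1+P_T')}\big). \]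
   Context: Setting: $\mathcal{X}\subseteq\mathbb{R}^d$ nonempty closed convex; $f_t:\mathcal{X}\to\mathbb{R}$ convex differentiable, revealed after $\mathbf{x}_t$ is played. A1: $a\le f_t(\mathbf{x})\le a+c$ on $\mathcal{X}$. A2: $\max_{\mathbf{x}\in\mathcal{X}}\|\nabla f_t(\mathbf{x})\|_2\le G$. A3: $\mathbf{0}\in\mathcal{X}$, diameter of $\mathcal{X}$ at most $D$. A4: given maps $\Phi_t:\mathcal{X}\to\mathcal{X}$ with $\|\Phi_t(\mathbf{x})-\Phi_t(\mathbf{x}')\|_2\le\|\mathbf{x}-\mathbf{x}'\|_2$. Ader with dynamical models: for $\mathcal{H}=\{\eta_1\le\dots\le\eta_N\}$, one expert per $\eta$ starting at arbitrary $\mathbf{x}_1^\eta\in\mathcal{X}$ and updating $\bar{\mathbf{x}}_{t+1}^\eta=\Pi_{\mathcal{X}}[\mathbf{x}_t^\eta-\eta\nabla f_t(\mathbf{x}_t^\eta)]$, $\mathbf{x}_{t+1}^\eta=\Phi_t(\bar{\mathbf{x}}_{t+1}^\eta)$; initial weights $w_1^{\eta_i}=\frac{C}{i(i+1)}$, $C=1+1/N$; output $\mathbf{x}_t=\sum_\eta w_t^\eta\mathbf{x}_t^\eta$; weights $w_{t+1}^\eta=\frac{w_t^\eta e^{-\alpha f_t(\mathbf{x}_t^\eta)}}{\sum_\mu w_t^\mu e^{-\alpha f_t(\mathbf{x}_t^\mu)}}$. *)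

From Stdlib Require Import Reals Lra Lia ZArith.
Open Scope R_scope.

(* Vectors of R^d are represented as functions nat -> R whose coordinates
   with index >= d vanish (see in_Rd). *)
Definition vec := nat -> R.

Definition in_Rd (d : nat) (x : vec) : Prop := forall i, (d <= i)%nat -> x i = 0.

Definition vadd (x y : vec) : vec := fun i => x i + y i.
Definition vsub (x y : vec) : vec := fun i => x i - y i.
Definition vscale (a : R) (x : vec) : vec := fun i => a * x i.
Definition vzero : vec := fun _ => 0.

(* sum_{i=1}^n F i *)
Fixpoint rsum (n : nat) (F : nat -> R) : R :=
  match n with
  | O => 0
  | S m => rsum m F + F n
  end.

(* sum over coordinates 0..d-1 *)
Fixpoint csum (d : nat) (F : nat -> R) : R :=
  match d with
  | O => 0
  | S m => csum m F + F m
  end.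

Definition inner (d : nat) (x y : vec) : R := csum d (fun i => x i * y i).
Definition vnorm (d : nat) (x : vec) : R := sqrt (inner d x x).

Definition convex_set (d : nat) (X : vec -> Prop) : Prop :=
  forall x y lam, X x -> X y -> 0 <= lam <= 1 ->
    X (vadd (vscale lam x) (vscale (1 - lam) y)).

Definition closed_in_Rd (d : nat) (X : vec -> Prop) : Prop :=
  forall (s : nat -> vec) (y : vec), (forall n, X (s n)) -> in_Rd d y ->
    (forall eps, 0 < eps -> exists N0, forall n, (N0 <= n)%nat ->
        vnorm d (vsub (s n) y) < eps) ->
    X y.

Definition convex_on (X : vec -> Prop) (f : vec -> R) : Prop :=
  forall x y lam, X x -> X y -> 0 <= lam <= 1 ->
    f (vadd (vscale lam x) (vscale (1 - lam) y)) <= lam * f x + (1 - lam) * f y.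

Definition is_gradient (d : nat) (f : vec -> R) (x g : vec) : Prop :=
  in_Rd d g /\
  forall eps, 0 < eps -> exists delta, 0 < delta /\
    forall h, in_Rd d h -> vnorm d h < delta ->
      Rabs (f (vadd x h) - f x - inner d g h) <= eps * vnorm d h.

Definition is_projection (d : nat) (X : vec -> Prop) (proj : vec -> vec) : Prop :=
  forall y, X (proj y) /\ forall z, X z -> vnorm d (vsub y (proj y)) <= vnorm d (vsub y z).

Definition Rfloor_Z (x : R) : Z := Int_part x.
Definition Rceil_Z (x : R) : Z := (- Int_part (- x))%Z.
Definition log2R (x : R) : R := ln x / ln 2.

Section Ader.
Variables (f : nat -> vec -> R) (grad : nat -> vec -> vec)
          (Phi : nat -> vec -> vec) (proj : vec -> vec)
          (eta : nat -> R) (x1 : nat -> vec) (N : nat) (alpha : R).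

(* expert_aux n i = x_{n+1}^{eta_i} *)
Fixpoint expert_aux (n : nat) (i : nat) : vec :=
  match n with
  | O => x1 i
  | S m => let xt := expert_aux m i in
           Phi (S m) (proj (vsub xt (vscale (eta i) (grad (S m) xt))))
  end.

Definition expert (t i : nat) : vec := expert_aux (t - 1) i.

Definition C_const : R := 1 + 1 / INR N.

(* weight_aux n i = w_{n+1}^{eta_i} *)
Fixpoint weight_aux (n : nat) (i : nat) : R :=
  match n with
  | O => C_const / (INR i * (INR i + 1))
  | S m =>
      weight_aux m i * exp (- alpha * f (S m) (expert_aux m i)) /
      rsum N (fun mu => weight_aux m mu * exp (- alpha * f (S m) (expert_aux m mu)))
  end.

Definition weight (t i : nat) : R := weight_aux (t - 1) i.

Definition ader_output (t : nat) : vec :=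
  fun j => rsum N (fun i => weight t i * expert t i j).

End Ader.

Definition N_thm5 (T : nat) : nat :=
  (Z.to_nat (Rceil_Z (/ 2 * log2R (1 + 2 * INR T))) + 1)%nat.
Definition eta_thm5 (D G : R) (T : nat) (i : nat) : R :=
  2 ^ (i - 1) * D / G * sqrt (1 / INR T).
Definition alpha_thm5 (c : R) (T : nat) : R := sqrt (8 / (INR T * c ^ 2)).

(* Since [Phi_t] is nonexpansive, the usual telescoping argument of OGD survives a moving
   comparator at the price of [2 D |u_(t+1) - Phi_t(u_t)|] per round, so expert [eta] has
   dynamic regret at most [(D^2 + 2 D P'_T) / (2 eta) + eta T G^2 / 2].  The step sizes
   double, so the [k]-th one is within a factor 2 of the optimal tuning, which costs a
   factor [3/2].  The meta-algorithm is exponentially weighted averaging: by Jensen's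
   inequality and Hoeffding's lemma its regret against expert [k] is at most
   [ln (1 / w_1^k) / alpha + T alpha c^2 / 8], and the prior [w_1^k >= 1 / (k (k + 1))]
   gives [ln (1 / w_1^k) <= 2 ln (k + 1)]. *)

From Stdlib Require Import Reals Lra Lia ZArith FunctionalExtensionality.
From Coquelicot Require Import Coquelicot.
Open Scope R_scope.

Ltac vec_ring := intros; unfold vadd, vsub, vscale, vzero; cbv beta; ring.

(** * Euclidean geometry *)

Lemma csum_ext d (F G : nat -> R) :
  (forall i, (i < d)%nat -> F i = G i) -> csum d F = csum d G.
Proof. induction d as [|d IH]; intros H; simpl; auto. rewrite IH, H; auto; lia. Qed.

Lemma inner_ext d x x' y y' :
  (forall i, x i = x' i) -> (forall i, y i = y' i) -> inner d x y = inner d x' y'.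
Proof. intros Hx Hy; apply csum_ext; intros; rewrite Hx, Hy; auto. Qed.

Lemma vnorm_ext d x y : (forall i, x i = y i) -> vnorm d x = vnorm d y.
Proof. intros H; unfold vnorm; f_equal; apply inner_ext; auto. Qed.

Lemma inner_sym d x y : inner d x y = inner d y x.
Proof. unfold inner; induction d as [|d IH]; simpl; [|rewrite IH]; ring. Qed.

Lemma inner_self_ge0 d x : 0 <= inner d x x.
Proof.
unfold inner; induction d as [|d IH]; simpl; [lra|].
pose proof (Rle_0_sqr (x d)); unfold Rsqr in *; lra.
Qed.

Lemma inner_self_add_scale d a b k :
  inner d (fun i => a i + k * b i) (fun i => a i + k * b i) =
  inner d a a + 2 * k * inner d a b + k ^ 2 * inner d b b.
Proof. unfold inner; induction d as [|d IH]; simpl; [|rewrite IH]; ring. Qed.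

Lemma inner_scale_r d g k h : inner d g (vscale k h) = k * inner d g h.
Proof. unfold inner, vscale; induction d as [|d IH]; simpl; [|rewrite IH]; ring. Qed.

Lemma inner_sub_r_opp d g x u : inner d g (vsub x u) = - inner d g (vsub u x).
Proof. unfold inner, vsub; induction d as [|d IH]; simpl; [|rewrite IH]; ring. Qed.

Lemma vnorm_ge0 d x : 0 <= vnorm d x.
Proof. apply sqrt_pos. Qed.

Lemma vnorm_sq d x : vnorm d x ^ 2 = inner d x x.
Proof. unfold vnorm; rewrite <- Rsqr_pow2; apply Rsqr_sqrt, inner_self_ge0. Qed.

Lemma vnorm_le_of_inner d x r : 0 <= r -> inner d x x <= r ^ 2 -> vnorm d x <= r.
Proof.
intros Hr H; rewrite <- vnorm_sq in H; pose proof (vnorm_ge0 d x).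
apply Rsqr_incr_0_var; unfold Rsqr; nra.
Qed.

Lemma inner_self_le_of_vnorm d x r : 0 <= r -> vnorm d x <= r -> inner d x x <= r ^ 2.
Proof. intros Hr H; rewrite <- vnorm_sq; pose proof (vnorm_ge0 d x); nra. Qed.

Lemma vnorm_scale d k h : 0 <= k -> vnorm d (vscale k h) = k * vnorm d h.
Proof.
intros Hk; unfold vnorm.
replace (inner d (vscale k h) (vscale k h)) with (k ^ 2 * inner d h h).
- rewrite sqrt_mult, sqrt_pow2 by (auto using inner_self_ge0; nra); reflexivity.
- rewrite inner_scale_r, (inner_sym d (vscale k h)), inner_scale_r; ring.
Qed.

Lemma vnorm_sub_sym d x y : vnorm d (vsub x y) = vnorm d (vsub y x).
Proof. unfold vnorm, inner; f_equal; apply csum_ext; vec_ring. Qed.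

(* Cauchy-Schwarz: the quadratic [k |-> |a + k b|^2] is nonnegative. *)
Lemma inner_sq_le d a b : inner d a b ^ 2 <= inner d a a * inner d b b.
Proof.
set (A := inner d a a); set (B := inner d b b); set (m := inner d a b).
assert (Hq : forall k, 0 <= A + 2 * k * m + k ^ 2 * B).
{ intros k; pose proof (inner_self_ge0 d (fun i => a i + k * b i)) as H.
  rewrite inner_self_add_scale in H; exact H. }
assert (HA : 0 <= A) by apply inner_self_ge0.
assert (HB : 0 <= B) by apply inner_self_ge0.
destruct (Req_dec B 0) as [HB0|HB0].
- destruct (Req_dec m 0) as [Hm|Hm]; [rewrite Hm, HB0; lra|].
  specialize (Hq (- (A + 1) / (2 * m))); rewrite HB0 in Hq.
  replace (2 * (- (A + 1) / (2 * m)) * m) with (- (A + 1)) in Hq by (field; auto); lra.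
- specialize (Hq (- m / B)).
  replace (A + 2 * (- m / B) * m + (- m / B) ^ 2 * B) with (A - m ^ 2 / B) in Hq
    by (field; auto).
  assert (Hm : m ^ 2 / B <= A) by lra.
  apply Rle_div_l in Hm; lra.
Qed.

Lemma inner_le_vnorm d a b : inner d a b <= vnorm d a * vnorm d b.
Proof.
pose proof (inner_sq_le d a b) as H; rewrite <- !vnorm_sq in H.
pose proof (vnorm_ge0 d a); pose proof (vnorm_ge0 d b).
destruct (Rle_lt_dec (inner d a b) 0); [nra|].
apply Rsqr_incr_0_var; unfold Rsqr; nra.
Qed.

Lemma vnorm_add_le d a b : vnorm d (vadd a b) <= vnorm d a + vnorm d b.
Proof.
pose proof (vnorm_ge0 d a); pose proof (vnorm_ge0 d b).
apply vnorm_le_of_inner; [lra|].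
rewrite (inner_ext d (vadd a b) (fun i => a i + 1 * b i) _ (fun i => a i + 1 * b i))
  by vec_ring.
rewrite inner_self_add_scale, <- !vnorm_sq.
pose proof (inner_le_vnorm d a b); nra.
Qed.

Lemma in_Rd_sub d x y : in_Rd d x -> in_Rd d y -> in_Rd d (vsub x y).
Proof. intros Hx Hy i Hi; unfold vsub; rewrite Hx, Hy; auto; ring. Qed.

Lemma in_Rd_scale d k x : in_Rd d x -> in_Rd d (vscale k x).
Proof. intros Hx i Hi; unfold vscale; rewrite Hx; auto; ring. Qed.

(** * Finite sums *)

Lemma rsum_ext n F G : (forall i, (1 <= i <= n)%nat -> F i = G i) -> rsum n F = rsum n G.
Proof.
induction n as [|n IH]; intros H; simpl; auto.
rewrite IH, H; auto; [lia|]; intros; apply H; lia.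
Qed.

Lemma rsumD n F G : rsum n (fun i => F i + G i) = rsum n F + rsum n G.
Proof. induction n as [|n IH]; simpl; [|rewrite IH]; ring. Qed.

Lemma rsumB n F G : rsum n (fun i => F i - G i) = rsum n F - rsum n G.
Proof. induction n as [|n IH]; simpl; [|rewrite IH]; ring. Qed.

Lemma rsumZ n k F : rsum n (fun i => k * F i) = k * rsum n F.
Proof. induction n as [|n IH]; simpl; [|rewrite IH]; ring. Qed.

Lemma rsum_const n k : rsum n (fun _ => k) = INR n * k.
Proof. induction n as [|n IH]; cbn [rsum]; [simpl|rewrite IH, S_INR]; ring. Qed.

Lemma rsum_le n F G : (forall i, (1 <= i <= n)%nat -> F i <= G i) -> rsum n F <= rsum n G.
Proof.
induction n as [|n IH]; intros H; simpl; [lra|].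
assert (rsum n F <= rsum n G) by (apply IH; intros; apply H; lia).
assert (F (S n) <= G (S n)) by (apply H; lia).
lra.
Qed.

Lemma rsum_ge0 n F : (forall i, (1 <= i <= n)%nat -> 0 <= F i) -> 0 <= rsum n F.
Proof.
intros H; rewrite <- (Rmult_0_r (INR n)), <- rsum_const.
apply rsum_le; auto.
Qed.

Lemma rsum_gt0 n F :
  (1 <= n)%nat -> (forall i, (1 <= i <= n)%nat -> 0 < F i) -> 0 < rsum n F.
Proof.
intros Hn H; destruct n as [|n]; [lia|]; simpl.
assert (0 <= rsum n F) by (apply rsum_ge0; intros; apply Rlt_le, H; lia).
assert (0 < F (S n)) by (apply H; lia).
lra.
Qed.

Lemma rsum_ge_term n F k :
  (forall i, (1 <= i <= n)%nat -> 0 <= F i) -> (1 <= k <= n)%nat -> F k <= rsum n F.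
Proof.
induction n as [|n IH]; intros H Hk; [lia|]; simpl.
destruct (Nat.eq_dec k (S n)) as [->|Hkn].
- assert (0 <= rsum n F) by (apply rsum_ge0; intros; apply H; lia); lra.
- assert (F k <= rsum n F) by (apply IH; [intros; apply H|]; lia).
  assert (0 <= F (S n)) by (apply H; lia).
  lra.
Qed.

Lemma rsum_telescope_harmonic n :
  rsum n (fun i => 1 / (INR i * (INR i + 1))) = 1 - 1 / (INR n + 1).
Proof.
induction n as [|n IH]; cbn [rsum]; [simpl; field|].
rewrite IH, S_INR; pose proof (pos_INR n); field; lra.
Qed.

(** * Convexity and projections *)

Lemma small_step_exists (nh delta : R) :
  0 <= nh -> 0 < delta -> exists lam, 0 < lam <= 1 /\ lam * nh < delta.
Proof.
intros Hnh Hdel; exists (delta / (nh + delta)); split; [split|].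
- apply Rdiv_lt_0_compat; lra.
- apply Rle_div_l; lra.
- replace (delta / (nh + delta) * nh) with (delta - delta * delta / (nh + delta))
    by (field; lra).
  assert (0 < delta * delta / (nh + delta)) by (apply Rdiv_lt_0_compat; nra).
  lra.
Qed.

(* Were the tangent plane at [x] above [f u] by a gap, the chord from [x] towards [u]
   would stay below it by a fixed fraction of the step, contradicting differentiability
   at [x]. *)
Lemma convex_gradient_ineq d (X : vec -> Prop) f g x u :
  (forall x, X x -> in_Rd d x) -> convex_on X f -> is_gradient d f x g -> X x -> X u ->
  f x - f u <= inner d g (vsub x u).
Proof.
intros HXd Hcv [Hgd Hg] Hx Hu.
set (h := vsub u x); rewrite inner_sub_r_opp; fold h.
apply Rnot_lt_le; intros Hlt.
set (gap := inner d g h - (f u - f x)).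
set (nh := vnorm d h).
assert (Hnh : 0 <= nh) by apply vnorm_ge0.
set (eps := gap / (2 * (nh + 1))).
assert (Heps : 0 < eps) by (apply Rdiv_lt_0_compat; unfold gap; lra).
assert (Hepsnh : eps * nh <= gap / 2).
{ unfold eps; apply (Rle_div_r _ _ 2); [lra|].
  replace (gap / (2 * (nh + 1)) * nh * 2) with (gap * (nh / (nh + 1))) by (field; lra).
  rewrite <- (Rmult_1_r gap) at 2; apply Rmult_le_compat_l; [unfold gap; lra|].
  apply Rle_div_l; lra. }
destruct (Hg eps Heps) as [delta [Hdel Hd]].
destruct (small_step_exists nh delta Hnh Hdel) as [lam [Hlam Hlnh]].
specialize (Hd (vscale lam h) (in_Rd_scale d lam h (in_Rd_sub d u x (HXd u Hu) (HXd x Hx)))).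
rewrite vnorm_scale in Hd by lra; fold nh in Hd; specialize (Hd Hlnh).
rewrite inner_scale_r in Hd.
replace (vadd x (vscale lam h)) with (vadd (vscale lam u) (vscale (1 - lam) x)) in Hd
  by (apply functional_extensionality; unfold h; vec_ring).
pose proof (Hcv u x lam Hu Hx ltac:(lra)) as Hchord.
apply Rabs_le_between in Hd.
assert (Hslope : lam * (inner d g h - eps * nh) <= lam * (f u - f x)) by lra.
apply Rmult_le_reg_l in Hslope; [|lra].
unfold gap in Hepsnh; lra.
Qed.

(* Obtuse-angle property of the projection [p] of [y]: [<y - p, z - p> <= 0], because
   moving from [p] towards [z] inside [X] cannot bring us closer to [y]. *)
Lemma sq_dist_proj_le d (X : vec -> Prop) proj y z :
  convex_set d X -> is_projection d X proj -> X z ->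
  inner d (vsub (proj y) z) (vsub (proj y) z) <= inner d (vsub y z) (vsub y z).
Proof.
intros Hcv Hp Hz.
destruct (Hp y) as [HXp Hmin]; set (p := proj y) in *.
set (a := vsub y p); set (b := vsub z p).
set (A := inner d a a); set (B := inner d b b); set (m := inner d a b).
assert (HB : 0 <= B) by apply inner_self_ge0.
assert (Hsmall : forall lam, 0 < lam <= 1 -> 2 * m <= lam * B).
{ intros lam Hlam.
  set (q := vadd (vscale lam z) (vscale (1 - lam) p)).
  pose proof (Hmin q (Hcv z p lam Hz HXp ltac:(lra))) as Hq.
  apply sqrt_le_0 in Hq; try apply inner_self_ge0.
  rewrite (inner_ext d (vsub y q) (fun i => a i + (- lam) * b i) _
             (fun i => a i + (- lam) * b i)) in Hq by (unfold q, a, b; vec_ring).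
  rewrite inner_self_add_scale in Hq; fold a A m B in Hq.
  apply Rmult_le_reg_l with lam; nra. }
assert (Hm : m <= 0).
{ apply Rnot_lt_le; intros Hm.
  assert (Hlam : 0 < m / (B + m) <= 1)
    by (split; [apply Rdiv_lt_0_compat | apply Rle_div_l]; lra).
  specialize (Hsmall _ Hlam).
  replace (m / (B + m) * B) with (m - m / (B + m) * m) in Hsmall by (field; lra).
  assert (0 < m / (B + m) * m) by nra.
  lra. }
rewrite (inner_ext d (vsub y z) (fun i => a i + (-1) * b i) _ (fun i => a i + (-1) * b i))
  by (unfold a, b; vec_ring).
replace (inner d (vsub p z) (vsub p z)) with B by (apply csum_ext; unfold b; vec_ring).
rewrite inner_self_add_scale; fold A m B.
assert (0 <= A) by apply inner_self_ge0.
lra.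
Qed.

Lemma jensen_rsum d (X : vec -> Prop) (f : vec -> R) n (v : nat -> R) (x : nat -> vec) :
  convex_set d X -> convex_on X f -> (1 <= n)%nat ->
  (forall i, (1 <= i <= n)%nat -> 0 < v i) -> (forall i, (1 <= i <= n)%nat -> X (x i)) ->
  let xbar := fun j => rsum n (fun i => v i * x i j) / rsum n v in
  X xbar /\ f xbar <= rsum n (fun i => v i * f (x i)) / rsum n v.
Proof.
intros HXc Hf Hn Hv Hx; induction n as [|n IH]; [lia|].
destruct (Nat.eq_dec n 0) as [->|Hn0].
- assert (Hv1 : 0 < v 1%nat) by (apply Hv; lia).
  simpl; replace (fun j => (0 + v 1%nat * x 1%nat j) / (0 + v 1%nat)) with (x 1%nat)
    by (apply functional_extensionality; intros j; field; lra).
  split; [apply Hx; lia | right; field; lra].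
- destruct IH as [IH1 IH2]; try lia; try (intros; apply Hv || apply Hx; lia).
  set (xn := fun j => rsum n (fun i => v i * x i j) / rsum n v) in *.
  assert (Hs : 0 < rsum n v) by (apply rsum_gt0; [lia | intros; apply Hv; lia]).
  assert (Hw : 0 < v (S n)) by (apply Hv; lia).
  set (lam := rsum n v / (rsum n v + v (S n))).
  assert (Hlam : 0 <= lam <= 1)
    by (split; [apply Rdiv_le_0_compat | apply Rle_div_l]; lra).
  simpl rsum.
  replace (fun j => (rsum n (fun i => v i * x i j) + v (S n) * x (S n) j)
                    / (rsum n v + v (S n)))
    with (vadd (vscale lam xn) (vscale (1 - lam) (x (S n))))
    by (apply functional_extensionality; intros j; unfold vadd, vscale, xn, lam;
        field; lra).
  split; [apply HXc; auto; apply Hx; lia|].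
  eapply Rle_trans; [apply (Hf xn (x (S n)) lam IH1); auto; apply Hx; lia|].
  assert (lam * f xn <= lam * (rsum n (fun i => v i * f (x i)) / rsum n v))
    by (apply Rmult_le_compat_l; lra).
  eapply Rle_trans; [apply Rplus_le_compat_r; eassumption|].
  right; unfold lam; field; lra.
Qed.

(** * Hoeffding's lemma *)

Lemma le_of_deriv_ge0 (f df : R -> R) :
  (forall x, is_derive f x (df x)) -> (forall x, 0 <= x -> 0 <= df x) ->
  forall h, 0 <= h -> f 0 <= f h.
Proof.
intros Hd Hp h Hh.
destruct (Req_dec h 0) as [->|Hh0]; [lra|].
destruct (MVT_gen f 0 h df) as [c [Hc Heq]].
- intros x _; apply Hd.
- intros x _; apply derivable_continuous_pt.
  exists (df x); apply is_derive_Reals, Hd.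
- rewrite Rmin_left, Rmax_right in Hc by lra.
  assert (0 <= df c) by (apply Hp; lra).
  nra.
Qed.

(* With
   [L x := ln (1 - p + p e^-x)], both sides agree at [0] to first order and
   [L'' <= 1/4]; we integrate twice via [le_of_deriv_ge0]. *)
Lemma hoeffding_bernoulli (p h : R) : 0 <= p <= 1 -> 0 <= h ->
  ln (1 - p + p * exp (- h)) <= - h * p + h ^ 2 / 8.
Proof.
intros Hp Hh.
assert (Hpos : forall x, 0 < 1 - p + p * exp (- x)).
{ intros x; pose proof (exp_pos (- x)); destruct (Rle_lt_dec 1 p); nra. }
set (H := fun x => x / 4 - p + p * exp (- x) / (1 - p + p * exp (- x))).
set (G := fun x => x ^ 2 / 8 - x * p - ln (1 - p + p * exp (- x))).
assert (dH : forall x,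
  is_derive H x (1 / 4 - p * (1 - p) * exp (- x) / (1 - p + p * exp (- x)) ^ 2)).
{ intros x; specialize (Hpos x); unfold H; auto_derive; [lra | field; lra]. }
assert (dG : forall x, is_derive G x (H x)).
{ intros x; specialize (Hpos x); unfold G, H; auto_derive; [lra | field; lra]. }
assert (H_ge0 : forall x, 0 <= x -> 0 <= H x).
{ intros x Hx; replace 0 with (H 0) at 1
    by (unfold H; rewrite Ropp_0, exp_0; field; lra).
  apply (le_of_deriv_ge0 H _ dH); auto; intros y _.
  specialize (Hpos y); pose proof (exp_pos (- y)).
  set (e := exp (- y)) in *; set (A := 1 - p + p * e) in *.
  assert (p * (1 - p) * e <= A ^ 2 / 4)
    by (unfold A; pose proof (pow2_ge_0 ((1 - p) - p * e)); nra).
  assert (p * (1 - p) * e / A ^ 2 <= 1 / 4) by (apply Rle_div_l; nra).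
  lra. }
pose proof (le_of_deriv_ge0 G H dG H_ge0 h Hh) as HG.
unfold G in HG; cbv beta in HG.
rewrite Ropp_0, exp_0 in HG; replace (1 - p + p * 1) with 1 in HG by ring.
rewrite ln_1 in HG; lra.
Qed.

Lemma exp_convex u t lam :
  0 <= lam <= 1 -> exp (u + lam * t) <= (1 - lam) * exp u + lam * exp (u + t).
Proof.
intros Hlam; set (m := lam * t); set (E := exp (u + m)).
replace (exp u) with (E * exp (- m)) by (unfold E; rewrite <- exp_plus; f_equal; ring).
replace (exp (u + t)) with (E * exp (t - m)) by (unfold E; rewrite <- exp_plus; f_equal; ring).
pose proof (exp_ineq1_le (t - m)) as Ht; pose proof (exp_ineq1_le (- m)) as Hm.
assert (0 < E) by apply exp_pos.
assert (E * ((1 - lam) * (1 + - m) + lam * (1 + (t - m)))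
        <= (1 - lam) * (E * exp (- m)) + lam * (E * exp (t - m))).
{ assert (H1 : 0 <= (1 - lam) * E) by nra; assert (H2 : 0 <= lam * E) by nra.
  pose proof (Rmult_le_compat_l _ _ _ H1 Hm); pose proof (Rmult_le_compat_l _ _ _ H2 Ht).
  nra. }
replace ((1 - lam) * (1 + - m) + lam * (1 + (t - m))) with 1 in * by (unfold m; ring).
lra.
Qed.

Lemma exp_le_chord al a c l : 0 < c -> a <= l <= a + c ->
  exp (- al * l) <= (a + c - l) / c * exp (- al * a) + (l - a) / c * exp (- al * (a + c)).
Proof.
intros Hc Hl.
assert (Hlam : 0 <= (l - a) / c <= 1)
  by (split; [apply Rdiv_le_0_compat | apply Rle_div_l]; lra).
pose proof (exp_convex (- al * a) (- al * c) _ Hlam) as H.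
replace (- al * a + (l - a) / c * (- al * c)) with (- al * l) in H by (field; lra).
replace (- al * a + - al * c) with (- al * (a + c)) in H by ring.
replace ((a + c - l) / c) with (1 - (l - a) / c) by (field; lra).
exact H.
Qed.

Lemma weighted_mean_between n (v l : nat -> R) a b :
  (forall i, (1 <= i <= n)%nat -> 0 <= v i) -> rsum n v = 1 ->
  (forall i, (1 <= i <= n)%nat -> a <= l i <= b) ->
  a <= rsum n (fun i => v i * l i) <= b.
Proof.
intros Hv Hs Hl.
rewrite <- (Rmult_1_r a), <- (Rmult_1_r b), <- Hs, <- !rsumZ.
split; apply rsum_le; intros i Hi; specialize (Hl i Hi); specialize (Hv i Hi); nra.
Qed.

(* Each [exp (- al l_i)] lies below the chord through the endpoints [a] and [a + c], so
   the mixture is bounded by the Bernoulli case with the same mean. *)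
Lemma hoeffding_lemma n (v l : nat -> R) al a c :
  0 <= al -> 0 < c ->
  (forall i, (1 <= i <= n)%nat -> 0 <= v i) -> rsum n v = 1 ->
  (forall i, (1 <= i <= n)%nat -> a <= l i <= a + c) ->
  ln (rsum n (fun i => v i * exp (- al * l i))) <=
    - al * rsum n (fun i => v i * l i) + al ^ 2 * c ^ 2 / 8.
Proof.
intros Hal Hc Hv Hs Hl.
set (S := rsum n (fun i => v i * l i)).
pose proof (weighted_mean_between n v l a (a + c) Hv Hs Hl) as HS; fold S in HS.
set (p := (S - a) / c).
assert (Hp : 0 <= p <= 1) by (split; [apply Rdiv_le_0_compat | apply Rle_div_l]; lra).
assert (Hchord : rsum n (fun i => v i * exp (- al * l i))
                 <= exp (- al * a) * (1 - p + p * exp (- (al * c)))).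
{ eapply Rle_trans.
  - apply rsum_le with (G := fun i => v i * ((a + c - l i) / c * exp (- al * a)
                                        + (l i - a) / c * exp (- al * (a + c)))).
    intros i Hi; apply Rmult_le_compat_l; [apply Hv; auto | apply exp_le_chord; auto].
  - right.
    rewrite (rsum_ext n _ (fun i =>
               ((a + c) / c * exp (- al * a) - a / c * exp (- al * (a + c))) * v i
               + (exp (- al * (a + c)) / c - exp (- al * a) / c) * (v i * l i)))
      by (intros; field; lra).
    rewrite rsumD, !rsumZ; fold S; rewrite Hs.
    replace (- al * (a + c)) with (- al * a + - (al * c)) by ring.
    rewrite exp_plus; unfold p; field; lra. }
assert (Hmix : 0 < rsum n (fun i => v i * exp (- al * l i))).
{ apply Rlt_le_trans with (rsum n (fun i => v i * exp (- al * (a + c)))).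
  - rewrite (rsum_ext n _ (fun i => exp (- al * (a + c)) * v i)) by (intros; ring).
    rewrite rsumZ, Hs, Rmult_1_r; apply exp_pos.
  - apply rsum_le; intros i Hi; apply Rmult_le_compat_l; [apply Hv; auto|].
    specialize (Hl i Hi).
    assert (Hle : - al * (a + c) <= - al * l i) by nra.
    destruct (Rle_lt_or_eq_dec _ _ Hle) as [Hlt|Heq];
      [left; apply exp_increasing, Hlt | right; rewrite Heq; reflexivity]. }
eapply Rle_trans; [apply ln_le; [exact Hmix | exact Hchord]|].
rewrite ln_mult, ln_exp by (try apply exp_pos; pose proof (exp_pos (- (al * c)));
                            destruct (Rle_lt_dec 1 p); nra).
pose proof (hoeffding_bernoulli p (al * c) Hp ltac:(nra)).
replace (- (al * c) * p) with (- al * (S - a)) in * by (unfold p; field; lra).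
lra.
Qed.

(** * Regret of Ader with dynamical models *)

Lemma sq_le_add_of_le_add (A B del D : R) :
  0 <= A <= D -> 0 <= B <= D -> 0 <= del -> A <= B + del -> A ^ 2 <= B ^ 2 + 2 * D * del.
Proof.
intros HA HB Hdel HAB; destruct (Rle_lt_dec A B).
- assert (A * A <= B * B) by (apply Rmult_le_compat; lra).
  assert (0 <= D * del) by (apply Rmult_le_pos; lra).
  nra.
- assert ((A - B) * (A + B) <= del * (2 * D)) by (apply Rmult_le_compat; lra).
  nra.
Qed.

Section Ader.

Variables (d T N : nat) (X : vec -> Prop) (f : nat -> vec -> R)
  (grad : nat -> vec -> vec) (Phi : nat -> vec -> vec) (proj : vec -> vec)
  (eta : nat -> R) (x1 : nat -> vec) (alpha a c G D : R) (u : nat -> vec).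

Hypotheses
  (HXd : forall x, X x -> in_Rd d x)
  (HXconv : convex_set d X)
  (Hproj : is_projection d X proj)
  (Hc : 0 < c) (HG : 0 <= G)
  (Hconv : forall t, (1 <= t <= T)%nat -> convex_on X (f t))
  (Hgrad : forall t x, (1 <= t <= T)%nat -> X x -> is_gradient d (f t) x (grad t x))
  (HA1 : forall t x, (1 <= t <= T)%nat -> X x -> a <= f t x <= a + c)
  (HA2 : forall t x, (1 <= t <= T)%nat -> X x -> vnorm d (grad t x) <= G)
  (HA3_D : forall x y, X x -> X y -> vnorm d (vsub x y) <= D)
  (HA4_in : forall t x, (1 <= t <= T)%nat -> X x -> X (Phi t x))
  (HA4_lip : forall t x y, (1 <= t <= T)%nat -> X x -> X y ->
      vnorm d (vsub (Phi t x) (Phi t y)) <= vnorm d (vsub x y))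
  (HN : (1 <= N)%nat)
  (Hx1 : forall i, (1 <= i <= N)%nat -> X (x1 i))
  (Hu : forall t, (1 <= t <= S T)%nat -> X (u t)).

(* [e m i] is the point [x_(m+1)^(eta_i)] played by expert [i] in round [m + 1]. *)
Local Notation e := (expert_aux grad Phi proj eta x1).
Local Notation w := (weight_aux f grad Phi proj eta x1 N alpha).
Local Notation xt := (ader_output f grad Phi proj eta x1 N alpha).
Local Notation drift t := (vnorm d (vsub (u (S t)) (Phi t (u t)))).

Lemma expert_S m i : expert grad Phi proj eta x1 (S m) i = e m i.
Proof. unfold expert; simpl; rewrite Nat.sub_0_r; reflexivity. Qed.

Lemma weight_S m i : weight f grad Phi proj eta x1 N alpha (S m) i = w m i.
Proof. unfold weight; simpl; rewrite Nat.sub_0_r; reflexivity. Qed.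

Lemma expert_in_set m i : (m <= T)%nat -> (1 <= i <= N)%nat -> X (e m i).
Proof.
induction m as [|m IH]; intros Hm Hi; simpl; [auto|].
apply HA4_in; [lia | apply Hproj].
Qed.

Lemma expert_step i m : 0 < eta i -> (m < T)%nat -> (1 <= i <= N)%nat ->
  2 * eta i * (f (S m) (e m i) - f (S m) (u (S m))) <=
    inner d (vsub (e m i) (u (S m))) (vsub (e m i) (u (S m)))
    - inner d (vsub (e (S m) i) (u (S (S m)))) (vsub (e (S m) i) (u (S (S m))))
    + eta i ^ 2 * G ^ 2 + 2 * D * drift (S m).
Proof.
intros Heta Hm Hi.
set (t := S m); set (x := e m i); set (g := grad t x); set (et := eta i).
set (ybar := proj (vsub x (vscale et g))).
change (e t i) with (Phi t ybar).
assert (Ht : (1 <= t <= T)%nat) by (unfold t; lia).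
assert (Hx : X x) by (apply expert_in_set; lia).
assert (Hut : X (u t)) by (apply Hu; unfold t; lia).
assert (Hut1 : X (u (S t))) by (apply Hu; unfold t; lia).
assert (Hyb : X ybar) by apply Hproj.
assert (Hgd : et ^ 2 * inner d g g <= et ^ 2 * G ^ 2).
{ apply Rmult_le_compat_l; [nra|]; apply inner_self_le_of_vnorm, HA2; auto. }
assert (Hlin : 2 * et * (f t x - f t (u t)) <= 2 * et * inner d g (vsub x (u t))).
{ apply Rmult_le_compat_l; [unfold et; lra|].
  apply (convex_gradient_ineq d X); auto. }
assert (Hogd : inner d (vsub ybar (u t)) (vsub ybar (u t))
               <= inner d (vsub x (u t)) (vsub x (u t))
                  - 2 * et * inner d g (vsub x (u t)) + et ^ 2 * inner d g g).
{ eapply Rle_trans; [apply (sq_dist_proj_le d X); auto|].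
  rewrite (inner_ext d _ (fun j => vsub x (u t) j + (- et) * g j) _
             (fun j => vsub x (u t) j + (- et) * g j)) by vec_ring.
  rewrite inner_self_add_scale, (inner_sym d _ g); lra. }
assert (Hphi : vnorm d (vsub (Phi t ybar) (u (S t)))
               <= vnorm d (vsub ybar (u t)) + drift t).
{ rewrite (vnorm_ext d _ (vadd (vsub (Phi t ybar) (Phi t (u t)))
                               (vsub (Phi t (u t)) (u (S t))))) by vec_ring.
  eapply Rle_trans; [apply vnorm_add_le|].
  rewrite (vnorm_sub_sym d (Phi t (u t))).
  pose proof (HA4_lip t ybar (u t) Ht Hyb Hut); lra. }
pose proof (sq_le_add_of_le_add _ _ _ D
              (conj (vnorm_ge0 _ _) (HA3_D _ _ (HA4_in t ybar Ht Hyb) Hut1))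
              (conj (vnorm_ge0 _ _) (HA3_D _ _ Hyb Hut)) (vnorm_ge0 _ _) Hphi) as Hsq.
rewrite !vnorm_sq in Hsq.
lra.
Qed.

Lemma expert_regret i : 0 < eta i -> (1 <= i <= N)%nat ->
  rsum T (fun t => f t (expert grad Phi proj eta x1 t i)) - rsum T (fun t => f t (u t))
  <= (D ^ 2 + 2 * D * rsum T (fun t => drift t)) / (2 * eta i) + eta i * INR T * G ^ 2 / 2.
Proof.
intros Heta Hi.
assert (Hsum : forall m, (m <= T)%nat ->
  2 * eta i * rsum m (fun t => f t (expert grad Phi proj eta x1 t i) - f t (u t)) <=
  inner d (vsub (e 0%nat i) (u 1%nat)) (vsub (e 0%nat i) (u 1%nat))
  - inner d (vsub (e m i) (u (S m))) (vsub (e m i) (u (S m)))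
  + INR m * eta i ^ 2 * G ^ 2 + 2 * D * rsum m (fun t => drift t)).
{ induction m as [|m IH]; intros Hm; [simpl; lra|].
  cbn [rsum]; rewrite expert_S, S_INR.
  pose proof (IH ltac:(lia)); pose proof (expert_step i m Heta ltac:(lia) Hi).
  lra. }
specialize (Hsum T (le_n T)); rewrite rsumB in Hsum.
assert (Hinit : vnorm d (vsub (e 0%nat i) (u 1%nat)) <= D)
  by (apply HA3_D; [apply Hx1; auto | apply Hu; lia]).
assert (inner d (vsub (e 0%nat i) (u 1%nat)) (vsub (e 0%nat i) (u 1%nat)) <= D ^ 2)
  by (apply inner_self_le_of_vnorm; auto; pose proof (vnorm_ge0 d (vsub (e 0%nat i) (u 1%nat))); lra).
pose proof (inner_self_ge0 d (vsub (e T i) (u (S T)))).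
apply (Rmult_le_reg_l (2 * eta i)); [lra|].
replace (2 * eta i * ((D ^ 2 + 2 * D * rsum T (fun t => drift t)) / (2 * eta i)
                      + eta i * INR T * G ^ 2 / 2))
  with (D ^ 2 + 2 * D * rsum T (fun t => drift t) + INR T * eta i ^ 2 * G ^ 2)
  by (field; lra).
lra.
Qed.

Lemma weight_gt0 m i : (1 <= i <= N)%nat -> 0 < w m i.
Proof.
revert i; induction m as [|m IH]; intros i Hi; simpl.
- unfold C_const.
  assert (1 <= INR i) by (apply (le_INR 1); lia).
  assert (0 < 1 / INR N) by (apply Rdiv_lt_0_compat; [lra | apply (lt_INR 0); lia]).
  apply Rdiv_lt_0_compat; nra.
- apply Rdiv_lt_0_compat; [apply Rmult_lt_0_compat; auto; apply exp_pos|].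
  apply rsum_gt0; auto; intros; apply Rmult_lt_0_compat; auto; apply exp_pos.
Qed.

(* The prior weights sum to one because [sum_(i <= N) 1 / (i (i + 1)) = N / (N + 1)]. *)
Lemma weight_sum m : rsum N (w m) = 1.
Proof.
destruct m as [|m]; simpl.
- assert (1 <= INR N) by (apply (le_INR 1); lia).
  rewrite (rsum_ext N _ (fun i => C_const N * (1 / (INR i * (INR i + 1))))).
  + rewrite rsumZ, rsum_telescope_harmonic; unfold C_const; field; lra.
  + intros i Hi; assert (1 <= INR i) by (apply (le_INR 1); lia); field; lra.
- set (Z := rsum N (fun mu => w m mu * exp (- alpha * f (S m) (e m mu)))).
  assert (0 < Z).
  { apply rsum_gt0; auto; intros.
    apply Rmult_lt_0_compat; [apply weight_gt0; auto | apply exp_pos]. }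
  rewrite (rsum_ext N _ (fun i => / Z * (w m i * exp (- alpha * f (S m) (e m i)))))
    by (intros; unfold Rdiv; ring).
  rewrite rsumZ; fold Z; field; lra.
Qed.

Lemma ader_output_le_mixture m : (m < T)%nat ->
  f (S m) (xt (S m)) <= rsum N (fun i => w m i * f (S m) (e m i)).
Proof.
intros Hm.
destruct (jensen_rsum d X (f (S m)) N (w m) (e m) HXconv (Hconv (S m) ltac:(lia)) HN
            (fun i Hi => weight_gt0 m i Hi)
            (fun i Hi => expert_in_set m i ltac:(lia) Hi)) as [_ Hjensen].
rewrite weight_sum, Rdiv_1_r in Hjensen.
replace (xt (S m)) with (fun j => rsum N (fun i => w m i * e m i j) / 1); [exact Hjensen|].
apply functional_extensionality; intros j; unfold ader_output; rewrite Rdiv_1_r.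
apply rsum_ext; intros i Hi; rewrite weight_S, expert_S; reflexivity.
Qed.

(* Per round, Hoeffding's lemma bounds [ln] of the normaliser, which gives
   [alpha f_t(x_t) <= alpha f_t(x_t^k) + ln w_(t+1)^k - ln w_t^k + alpha^2 c^2 / 8];
   the logarithms telescope and [w_(T+1)^k <= 1]. *)
Lemma meta_regret k : 0 < alpha -> (1 <= k <= N)%nat ->
  rsum T (fun t => f t (xt t)) <=
  rsum T (fun t => f t (expert grad Phi proj eta x1 t k))
  + - ln (w 0%nat k) / alpha + INR T * alpha * c ^ 2 / 8.
Proof.
intros Hal Hk.
assert (Hind : forall m, (m <= T)%nat ->
  alpha * rsum m (fun t => f t (xt t)) <=
  alpha * rsum m (fun t => f t (expert grad Phi proj eta x1 t k))
  + ln (w m k) - ln (w 0%nat k) + INR m * (alpha ^ 2 * c ^ 2 / 8)).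
{ induction m as [|m IH]; intros Hm; [simpl; lra|].
  cbn [rsum]; rewrite expert_S, S_INR.
  set (Z := rsum N (fun mu => w m mu * exp (- alpha * f (S m) (e m mu)))).
  assert (HZ : 0 < Z).
  { apply rsum_gt0; auto; intros.
    apply Rmult_lt_0_compat; [apply weight_gt0; auto | apply exp_pos]. }
  assert (Hln : ln (w (S m) k) = ln (w m k) + - alpha * f (S m) (e m k) - ln Z).
  { change (w (S m) k) with (w m k * exp (- alpha * f (S m) (e m k)) / Z).
    pose proof (weight_gt0 m k Hk); pose proof (exp_pos (- alpha * f (S m) (e m k))).
    unfold Rdiv; rewrite !ln_mult, ln_exp, ln_Rinv;
      auto using Rmult_lt_0_compat, Rinv_0_lt_compat; ring. }
  pose proof (hoeffding_lemma N (w m) (fun i => f (S m) (e m i)) alpha a c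
                ltac:(lra) Hc (fun i Hi => Rlt_le _ _ (weight_gt0 m i Hi)) (weight_sum m)
                (fun i Hi => HA1 (S m) _ ltac:(lia) (expert_in_set m i ltac:(lia) Hi)))
    as Hhoef.
  cbv beta in Hhoef; fold Z in Hhoef.
  pose proof (Rmult_le_compat_l _ _ _ (Rlt_le _ _ Hal) (ader_output_le_mixture m ltac:(lia))).
  pose proof (IH ltac:(lia)).
  lra. }
assert (Hlast : ln (w T k) <= 0).
{ rewrite <- ln_1; apply ln_le; [apply weight_gt0; auto|].
  rewrite <- (weight_sum T); apply rsum_ge_term; auto.
  intros; apply Rlt_le, weight_gt0; auto. }
specialize (Hind T (le_n T)).
apply (Rmult_le_reg_l alpha); [lra|].
replace (alpha * (rsum T (fun t => f t (expert grad Phi proj eta x1 t k))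
                  + - ln (w 0%nat k) / alpha + INR T * alpha * c ^ 2 / 8))
  with (alpha * rsum T (fun t => f t (expert grad Phi proj eta x1 t k))
        - ln (w 0%nat k) + INR T * (alpha ^ 2 * c ^ 2 / 8)) by (field; lra).
lra.
Qed.

Lemma ader_regret k : 0 < alpha -> 0 < eta k -> (1 <= k <= N)%nat ->
  rsum T (fun t => f t (xt t)) - rsum T (fun t => f t (u t))
  <= (D ^ 2 + 2 * D * rsum T (fun t => drift t)) / (2 * eta k) + eta k * INR T * G ^ 2 / 2
     + - ln (w 0%nat k) / alpha + INR T * alpha * c ^ 2 / 8.
Proof.
intros Hal Heta Hk.
pose proof (expert_regret k Heta Hk); pose proof (meta_regret k Hal Hk).
lra.
Qed.

End Ader.

(** * Tuning of the parameters *)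

Lemma ln2_gt0 : 0 < ln 2.
Proof. rewrite <- ln_1; apply ln_increasing; lra. Qed.

Lemma sqrt_eq_Rpower2_half_log2 q : 0 < q -> sqrt q = Rpower 2 (/ 2 * log2R q).
Proof.
intros Hq; pose proof ln2_gt0.
rewrite <- Rpower_sqrt by lra; unfold Rpower, log2R; f_equal; field; lra.
Qed.

Lemma half_log2_floor_spec q : 1 <= q ->
  exists j : nat, Rfloor_Z (/ 2 * log2R q) = Z.of_nat j /\ 2 ^ j <= sqrt q <= 2 * 2 ^ j.
Proof.
intros Hq; pose proof ln2_gt0.
set (y := / 2 * log2R q).
assert (Hy : 0 <= y).
{ unfold y, log2R; apply Rmult_le_pos; [lra|]; apply Rdiv_le_0_compat; auto.
  rewrite <- ln_1; apply ln_le; lra. }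
destruct (base_Int_part y) as [Hz1 Hz2]; unfold Rfloor_Z; set (z := Int_part y) in *.
assert (Hz : (0 <= z)%Z) by (assert (-1 < z)%Z by (apply lt_IZR; lra); lia).
assert (Hj : INR (Z.to_nat z) = IZR z) by (rewrite INR_IZR_INZ, Z2Nat.id; auto).
exists (Z.to_nat z); split; [rewrite Z2Nat.id; auto|].
rewrite sqrt_eq_Rpower2_half_log2 by lra; fold y.
replace (2 * 2 ^ Z.to_nat z) with (Rpower 2 (1 + INR (Z.to_nat z)))
  by (rewrite Rpower_plus, Rpower_1, Rpower_pow; lra).
rewrite <- Rpower_pow, Hj by lra.
split; [apply Rle_Rpower; lra | left; apply Rpower_lt; lra].
Qed.

Lemma one_add_ratio_bounds P D T : 0 < D -> 0 <= P <= T * D ->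
  1 <= 1 + 2 * P / D <= 1 + 2 * T.
Proof.
intros HD HP.
assert (0 <= 2 * P / D) by (apply Rdiv_le_0_compat; lra).
assert (2 * P / D <= 2 * T) by (apply Rle_div_l; lra).
lra.
Qed.

Lemma doubling_index_le_N T q j : 1 <= q <= 1 + 2 * INR T ->
  Rfloor_Z (/ 2 * log2R q) = Z.of_nat j -> (S j <= N_thm5 T)%nat.
Proof.
intros Hq Hj; pose proof ln2_gt0.
assert (Hle : / 2 * log2R q <= / 2 * log2R (1 + 2 * INR T)).
{ apply Rmult_le_compat_l; [lra|]; unfold log2R, Rdiv.
  apply Rmult_le_compat_r; [apply Rlt_le, Rinv_0_lt_compat; lra | apply ln_le; lra]. }
destruct (base_Int_part (/ 2 * log2R q)) as [Hf _].
destruct (base_Int_part (- (/ 2 * log2R (1 + 2 * INR T)))) as [Hc _].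
assert (Hfc : (Rfloor_Z (/ 2 * log2R q) <= Rceil_Z (/ 2 * log2R (1 + 2 * INR T)))%Z).
{ unfold Rfloor_Z, Rceil_Z; apply le_IZR; rewrite opp_IZR; lra. }
unfold N_thm5; lia.
Qed.

(* With [s := sqrt (1 + 2 P / D)] the bound equals [D G sqrt T / 2 * (s^2 + r^2) / r], and
   [s^2 + r^2 <= 3 r s] because [(s - r) (2 r - s) >= 0]. *)
Lemma step_size_tuning (D G T P r : R) :
  0 < D -> 0 < G -> 0 < T -> 0 <= P -> 0 < r -> r <= sqrt (1 + 2 * P / D) <= 2 * r ->
  let eta := r * D / (G * sqrt T) in
  (D ^ 2 + 2 * D * P) / (2 * eta) + eta * T * G ^ 2 / 2
  <= 3 * G / 2 * sqrt (T * (D ^ 2 + 2 * D * P)).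
Proof.
intros HD HG HT HP Hr Hs eta.
set (q := 1 + 2 * P / D) in Hs; set (s := sqrt q) in Hs.
assert (Hq : 0 <= q) by (unfold q; assert (0 <= P / D) by (apply Rdiv_le_0_compat; lra); lra).
assert (Hs2 : s ^ 2 = q) by (apply pow2_sqrt; auto).
set (sT := sqrt T); assert (HsT : 0 < sT) by (apply sqrt_lt_R0; lra).
assert (HsT2 : sT ^ 2 = T) by (apply pow2_sqrt; lra).
replace (D ^ 2 + 2 * D * P) with (D ^ 2 * s ^ 2) by (rewrite Hs2; unfold q; field; lra).
rewrite sqrt_mult, sqrt_mult, !sqrt_pow2 by (lra || nra); fold sT.
rewrite <- HsT2; unfold eta; fold sT.
replace (D ^ 2 * s ^ 2 / (2 * (r * D / (G * sT))) + r * D / (G * sT) * sT ^ 2 * G ^ 2 / 2)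
  with (D * G * sT / 2 * ((s ^ 2 + r ^ 2) / r)) by (field; lra).
replace (3 * G / 2 * (sT * (D * s))) with (D * G * sT / 2 * (3 * s)) by field.
apply Rmult_le_compat_l; [apply Rdiv_le_0_compat; [repeat apply Rmult_le_pos | ]; lra|].
apply Rle_div_l; [lra|].
assert (0 <= (s - r) * (2 * r - s)) by (apply Rmult_le_pos; lra).
nra.
Qed.

Lemma eta_thm5_S D G T j :
  eta_thm5 D G T (S j) = 2 ^ j * D / (G * sqrt (INR T)).
Proof.
unfold eta_thm5; simpl (S j - 1)%nat; rewrite Nat.sub_0_r.
unfold Rdiv; rewrite Rmult_1_l, sqrt_inv, Rinv_mult; ring.
Qed.

Lemma alpha_thm5_gt0 c T : 0 < c -> (1 <= T)%nat -> 0 < alpha_thm5 c T.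
Proof.
intros Hc HT; assert (1 <= INR T) by (apply (le_INR 1); auto).
apply sqrt_lt_R0, Rdiv_lt_0_compat; nra.
Qed.

Lemma alpha_thm5_balance c T L : 0 < c -> (1 <= T)%nat ->
  L / alpha_thm5 c T + INR T * alpha_thm5 c T * c ^ 2 / 8 = c * sqrt (2 * INR T) / 4 * (L + 1).
Proof.
intros Hc HT; assert (1 <= INR T) by (apply (le_INR 1); auto).
pose proof (alpha_thm5_gt0 c T Hc HT) as Hal.
set (K := c * sqrt (2 * INR T) / 4); set (al := alpha_thm5 c T) in *.
assert (HK : 0 < K) by (unfold K; pose proof (sqrt_lt_R0 (2 * INR T) ltac:(lra)); nra).
assert (HK2 : K ^ 2 = INR T * c ^ 2 / 8).
{ unfold K; replace ((c * sqrt (2 * INR T) / 4) ^ 2) with (c ^ 2 * sqrt (2 * INR T) ^ 2 / 16)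
    by field; rewrite pow2_sqrt by lra; field. }
assert (Hal2 : al ^ 2 = 8 / (INR T * c ^ 2))
  by (apply pow2_sqrt, Rlt_le, Rdiv_lt_0_compat; nra).
assert (HaK : al * K = 1).
{ assert ((al * K) ^ 2 = 1)
    by (rewrite Rpow_mult_distr, Hal2, HK2; field; split; nra).
  assert (0 < al * K) by nra.
  nra. }
assert (Hinv : / al = K) by (apply (Rmult_eq_reg_l al); [rewrite Rinv_r |]; lra).
replace (INR T * al * c ^ 2 / 8) with (al * K * K)
  by (replace (al * K * K) with (al * K ^ 2) by ring; rewrite HK2; field).
replace (L / al) with (L * K) by (unfold Rdiv; rewrite Hinv; reflexivity).
rewrite HaK; ring.
Qed.

(* [C_N >= 1], so the prior weight of expert [k] is at least [1 / (k (k + 1))]. *)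
Lemma neg_ln_prior_weight_le N k : (1 <= N)%nat -> (1 <= k)%nat ->
  - ln (C_const N / (INR k * (INR k + 1))) <= 2 * ln (INR k + 1).
Proof.
intros HN Hk.
assert (1 <= INR k) by (apply (le_INR 1); auto).
assert (HC : 1 <= C_const N).
{ unfold C_const; assert (0 < 1 / INR N) by (apply Rdiv_lt_0_compat; [lra | apply (lt_INR 0); lia]).
  lra. }
assert (0 < INR k * (INR k + 1)) by nra.
unfold Rdiv; rewrite ln_mult, ln_Rinv by (try apply Rinv_0_lt_compat; lra).
assert (0 <= ln (C_const N)) by (rewrite <- ln_1; apply ln_le; lra).
assert (ln (INR k * (INR k + 1)) <= ln ((INR k + 1) ^ 2)) by (apply ln_le; nra).
rewrite ln_pow in * by lra; simpl (INR 2) in *.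
lra.
Qed.

Theorem theorem5
  (d : nat) (X : vec -> Prop) (T : nat)
  (f : nat -> vec -> R) (grad : nat -> vec -> vec)
  (Phi : nat -> vec -> vec) (proj : vec -> vec)
  (a c G D : R) (x1 : nat -> vec) (u : nat -> vec)
  (HXd : forall x, X x -> in_Rd d x)
  (HXconv : convex_set d X)
  (HXclosed : closed_in_Rd d X)
  (Hproj : is_projection d X proj)
  (HT : (1 <= T)%nat)
  (Hc : 0 < c) (HG : 0 < G) (HD : 0 < D)
  (Hconv : forall t, (1 <= t <= T)%nat -> convex_on X (f t))
  (Hgrad : forall t x, (1 <= t <= T)%nat -> X x -> is_gradient d (f t) x (grad t x))
  (HA1 : forall t x, (1 <= t <= T)%nat -> X x -> a <= f t x <= a + c)
  (HA2 : forall t x, (1 <= t <= T)%nat -> X x -> vnorm d (grad t x) <= G)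
  (HA3_0 : X vzero)
  (HA3_D : forall x y, X x -> X y -> vnorm d (vsub x y) <= D)
  (HA4_in : forall t x, (1 <= t <= T)%nat -> X x -> X (Phi t x))
  (HA4_lip : forall t x y, (1 <= t <= T)%nat -> X x -> X y ->
      vnorm d (vsub (Phi t x) (Phi t y)) <= vnorm d (vsub x y))
  (Hx1 : forall i, (1 <= i <= N_thm5 T)%nat -> X (x1 i))
  (Hu : forall t, (1 <= t <= S T)%nat -> X (u t)) :
  let N := N_thm5 T in
  let eta := eta_thm5 D G T in
  let alpha := alpha_thm5 c T in
  let xt := ader_output f grad Phi proj eta x1 N alpha in
  let P := rsum T (fun t => vnorm d (vsub (u (S t)) (Phi t (u t)))) in
  let k := (Rfloor_Z (/ 2 * log2R (1 + 2 * P / D)) + 1)%Z in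
  rsum T (fun t => f t (xt t)) - rsum T (fun t => f t (u t))
  <= 3 * G / 2 * sqrt (INR T * (D ^ 2 + 2 * D * P))
     + c * sqrt (2 * INR T) / 4 * (1 + 2 * ln (IZR k + 1)).
Proof.
intros N eta alpha xt P k.
assert (HTpos : 0 < INR T) by (apply (lt_INR 0); lia).
assert (HP : 0 <= P) by (apply rsum_ge0; intros; apply vnorm_ge0).
assert (HPT : P <= INR T * D).
{ rewrite <- rsum_const; apply rsum_le; intros t Ht.
  apply HA3_D; [apply Hu | apply HA4_in; [|apply Hu]]; lia. }
pose proof (one_add_ratio_bounds P D (INR T) HD (conj HP HPT)) as Hq.
destruct (half_log2_floor_spec _ (proj1 Hq)) as [j [Hj Hsq]].
pose proof (doubling_index_le_N T _ j Hq Hj) as HjN.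
assert (HN : (1 <= N)%nat) by (unfold N, N_thm5; lia).
assert (Hk : IZR k = INR (S j))
  by (unfold k; rewrite Hj, plus_IZR, <- INR_IZR_INZ, S_INR; reflexivity).
assert (Heta : eta (S j) = 2 ^ j * D / (G * sqrt (INR T))) by apply eta_thm5_S.
assert (Heta_pos : 0 < eta (S j)).
{ rewrite Heta; apply Rdiv_lt_0_compat; [apply Rmult_lt_0_compat; [apply pow_lt|]|
    apply Rmult_lt_0_compat; [|apply sqrt_lt_R0]]; lra. }
pose proof (ader_regret d T N X f grad Phi proj eta x1 alpha a c G D u HXd HXconv Hproj Hc
              ltac:(lra) Hconv Hgrad HA1 HA2 HA3_D HA4_in HA4_lip HN
              Hx1 Hu (S j) (alpha_thm5_gt0 c T Hc HT) Heta_pos ltac:(lia)) as Hregret.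
fold P xt in Hregret; unfold alpha in Hregret.
rewrite Rplus_assoc, alpha_thm5_balance in Hregret by auto.
rewrite Heta in Hregret.
pose proof (step_size_tuning D G (INR T) P (2 ^ j) HD HG HTpos HP (pow_lt 2 j ltac:(lra)) Hsq)
  as Htuning.
pose proof (neg_ln_prior_weight_le N (S j) HN ltac:(lia)) as Hprior.
replace (weight_aux f grad Phi proj eta x1 N (alpha_thm5 c T) 0 (S j))
  with (C_const N / (INR (S j) * (INR (S j) + 1))) in Hregret by reflexivity.
set (K := c * sqrt (2 * INR T) / 4) in *.
assert (0 <= K) by (unfold K; pose proof (sqrt_pos (2 * INR T)); nra).
pose proof (Rmult_le_compat_l K _ _ ltac:(lra) Hprior).
rewrite Hk; cbv zeta in Htuning.
lra.
Qed.
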